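(* If $\mathcal F=\{f_1,\dots,f_M\}$ is a frame for $\mathbb C^N$ and $\mathbb M^{\mathcal F}$ is injective, then $M\ge 2N$.
   Context: A frame for $\mathbb C^N$ is a spanning family $\{f_1,\dots,f_M\}$, $\langle x,y\rangle=\sum_k x_k\overline{y_k}$. $\mathbb M^{\mathcal F}$ is injective means $|\langle x,f_k\rangle|=|\langle y,f_k\rangle|$ for all $k$ implies $y=cx$ for some $c\in\mathbb C$ with $|c|=1$. *)

From HB Require Import structures.
From mathcomp Require Import all_boot all_order all_algebra.
From mathcomp Require Import complex reals.
Set Implicit Arguments. Unset Strict Implicit. Unset Printing Implicit Defensive.
Import Order.TTheory GRing.Theory Num.Theory.
Local Open Scope ring_scope.

Definition cinner (R : realType) (N : nat) (x y : 'rV[R[i]]_N) : R[i] :=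
  \sum_(k < N) x 0 k * (y 0 k)^*.

Definition frame_mx (R : realType) (N M : nat) (f : 'I_M -> 'rV[R[i]]_N)
  : 'M[R[i]]_(M, N) := \matrix_(k < M) f k.

Definition is_frame (R : realType) (N M : nat) (f : 'I_M -> 'rV[R[i]]_N) : Prop :=
  row_full (frame_mx f).

(* injectivity of the phase retrieval map M^F on C^N / {|c| = 1} *)
Definition phase_injective (R : realType) (N M : nat) (f : 'I_M -> 'rV[R[i]]_N)
  : Prop :=
  forall x y : 'rV[R[i]]_N,
    (forall k : 'I_M, `|cinner x (f k)| = `|cinner y (f k)|) ->
    exists c : R[i], `|c| = 1 /\ y = c *: x.

From HB Require Import structures.
From mathcomp Require Import all_boot all_order all_algebra.
From mathcomp Require Import complex reals.
From mathcomp Require Import ring.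

(* Suppose M < 2N and pick x <> 0 orthogonal to f_k0, which needs N >= 2.  The
   M real-linear conditions Re (<x, f_k>^* <v, f_k>) = 0 for k <> k0 and
   Im <v, x> = 0 on v in C^N ~ R^(2N) have a solution v <> 0.  The first ones
   give |<x + v, f_k>| = |<x - v, f_k>| for all k (for k0 because <x, f_k0> = 0),
   so x - v = c (x + v) with |c| = 1.  Pairing with x, where <x, x> > 0 and
   <v, x> is real, forces c = 1, hence v = 0.  The condition Im <v, x> = 0 is
   what excludes the solutions v = i t x, which always exist. *)
Set Implicit Arguments.
Unset Strict Implicit.
Unset Printing Implicit Defensive.

Import Order.TTheory GRing.Theory Num.Theory Num.Def.
Local Open Scope ring_scope.

Lemma exists_nz_left_kernel (F : fieldType) m n (A : 'M[F]_(m, n)) :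
  (n < m)%N -> exists2 v : 'rV_m, v != 0 & v *m A = 0.
Proof.
move=> lt_nm; have /rowV0Pn[v /sub_kermxP vA0 nz_v] : kermx A != 0.
  by rewrite kermx_eq0 /row_free neq_ltn (leq_ltn_trans (rank_leq_col A)).
by exists v.
Qed.

Section ClosedField.
Variable C : numClosedFieldType.
Local Notation mxconj := (map_mx conjC).

Lemma mxconjK m n : involutive (mxconj : 'M[C]_(m, n) -> 'M[C]_(m, n)).
Proof. by move=> A; apply/matrixP => i j; rewrite !mxE conjCK. Qed.

Lemma exists_nz_Re_left_kernel n m (A : 'M[C]_(n, m)) : (m < n + n)%N ->
  exists2 v : 'rV_n, v != 0 & forall k, 'Re ((v *m A) 0 k) = 0.
Proof.
move=> lt_m2n.
suff [v nz_v vA] : exists2 v : 'rV_n, v != 0 & v *m A + mxconj (v *m A) = 0.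
  exists v => // k; have /matrixP/(_ 0 k) := vA.
  by rewrite ReE !mxE => ->; rewrite mul0r.
have [w nz_w] := exists_nz_left_kernel (col_mx A (mxconj A)) lt_m2n.
rewrite -[w]hsubmxK mul_row_col; set s := lsubmx w; set t := rsubmx w => Est.
have Ets : mxconj t *m A + mxconj s *m mxconj A = 0.
  by rewrite addrC -[X in mxconj t *m X]mxconjK -!map_mxM -map_mxD Est map_mx0.
(* Both [s + conj t] and ['i (s - conj t)] solve the system; they cannot both
   vanish since [w != 0]. *)
have [st0 | nz_st] := eqVneq (s + mxconj t) 0; last first.
  exists (s + mxconj t) => //.
  rewrite map_mxM map_mxD /= mxconjK !mulmxDl [mxconj s *m _ + _]addrC.
  by rewrite addrACA Est Ets addr0.
exists ('i *: (s - mxconj t)).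
  rewrite scaler_eq0 negb_or neq0Ci /=; apply: contraNneq nz_w => st0'.
  have s0 : s = 0.
    have : 2%:R *: s = 0.
      by rewrite scaler_nat mulr2n -{1}(addrK (mxconj t) s) st0 add0r addrC st0'.
    by move/eqP; rewrite scaler_eq0 pnatr_eq0 => /eqP.
  have t0 : t = 0.
    have : mxconj t = 0 by rewrite -st0 s0 add0r.
    by move/(congr1 mxconj); rewrite mxconjK map_mx0.
  by rewrite -[w]hsubmxK -/s -/t s0 t0 row_mx0.
rewrite map_mxM map_mxZ map_mxB /= mxconjK conjCi -!scalemxAl !mulmxBl scaleNr -scalerBr.
by rewrite opprB addrACA -opprD Est Ets subrr scaler0.
Qed.

Lemma dotmx_mul_trmxC n m (A : 'M[C]_(m, n)) (v : 'rV_n) k :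
  (v *m mxconj A^T) 0 k = dotmx v (row k A).
Proof. by rewrite dotmxE !mxE; apply: eq_bigr => j _; rewrite !mxE. Qed.

Lemma exists_nz_dotmx_eq0 n (y : 'rV[C]_n) : (1 < n)%N ->
  exists2 x : 'rV_n, x != 0 & dotmx x y = 0.
Proof.
move=> lt1n; have [x nz_x xy] := exists_nz_left_kernel (mxconj y^T) lt1n.
by exists x; rewrite // dotmxE xy mxE.
Qed.

Lemma exists_nz_Re_dotmx_eq0 n m (g : 'I_m -> 'rV[C]_n) : (m < n + n)%N ->
  exists2 v : 'rV_n, v != 0 & forall k, 'Re (dotmx v (g k)) = 0.
Proof.
move=> lt_m2n.
have [v nz_v Rv] := exists_nz_Re_left_kernel (mxconj (\matrix_k g k)^T) lt_m2n.
by exists v => // k; rewrite -[g k]rowK -dotmx_mul_trmxC.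
Qed.

Lemma normCD_eq_normCB (p q : C) : 'Re (p^* * q) = 0 -> `|p + q| = `|p - q|.
Proof.
rewrite ReE => /eqP; rewrite mulf_eq0 invr_eq0 pnatr_eq0 orbF rmorphM /= conjCK => /eqP Re0.
apply/eqP; rewrite -(@eqrXn2 _ 2) // !normCK rmorphD rmorphB /= -subr_eq0.
have -> : (p + q) * (p^* + q^*) - (p - q) * (p^* - q^*) = 2%:R * (p^* * q + p * q^*).
  by ring.
by rewrite Re0 mulr0.
Qed.

Lemma eq1_of_real_sub_eq_mul_add (a b c : C) : a \is Num.real -> b \is Num.real ->
  a != 0 -> `|c| = 1 -> a - b = c * (a + b) -> c = 1.
Proof.
move=> ra rb nz_a c1 Eab.
have b0 : b = 0.
  have : `|a - b| ^+ 2 = `|a + b| ^+ 2 by rewrite Eab normrM c1 mul1r.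
  rewrite !real_normK ?rpredB ?rpredD // => /eqP; rewrite -subr_eq0.
  have -> : (a - b) ^+ 2 - (a + b) ^+ 2 = - 4%:R * a * b by ring.
  by rewrite !mulf_eq0 oppr_eq0 pnatr_eq0 (negPf nz_a) /= => /eqP.
move: Eab; rewrite b0 subr0 addr0 -[X in X = _]mul1r => /(mulIf nz_a).
by move->.
Qed.

End ClosedField.

Lemma cinner_dotmx (R : realType) N (x y : 'rV[R[i]]_N) : cinner x y = dotmx x y.
Proof. by rewrite dotmxE mxE; apply: eq_bigr => j _; rewrite !mxE. Qed.

Section PhaseRetrieval.
Variables (R : realType) (N M : nat) (f : 'I_M -> 'rV[R[i]]_N).
Hypothesis f_inj : phase_injective f.
Local Notation dot := (@dotmx R[i] N).

Lemma phase_injective_sign (x v : 'rV[R[i]]_N) :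
    x != 0 -> dotmx v x \is Num.real ->
    (forall k, `|dotmx x (f k) + dotmx v (f k)| = `|dotmx x (f k) - dotmx v (f k)|) ->
  v = 0.
Proof.
move=> nz_x vx_real Ev.
have [c [c1 Ec]] : exists c, `|c| = 1 /\ x - v = c *: (x + v).
  by apply: f_inj => k; rewrite !cinner_dotmx (linearDl dot) (linearBl dot) Ev.
have c_eq1 : c = 1.
  apply: (eq1_of_real_sub_eq_mul_add (a := dotmx x x) (b := dotmx v x)) => //.
  - exact/ger0_real/dnorm_ge0.
  - by rewrite dnorm_eq0.
  - by rewrite -(linearBl dot) Ec (linearZl_LR dot) (linearDl dot).
move: Ec; rewrite c_eq1 scale1r => /addrI vN.
have : 2%:R *: v = 0 by rewrite scaler_nat mulr2n -{1}vN addNr.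
by move/eqP; rewrite scaler_eq0 pnatr_eq0 => /eqP.
Qed.

End PhaseRetrieval.

Theorem proposition3p6 (R : realType) (N M : nat) (f : 'I_M -> 'rV[R[i]]_N) :
  (2 <= N)%N -> is_frame f -> phase_injective f -> (2 * N <= M)%N.
Proof.
move=> N_gt1 f_frame f_inj; rewrite leqNgt mul2n -addnn; apply/negP => lt_M2N.
have M_gt0 : (0 < M)%N.
  by rewrite (leq_trans _ (rank_leq_row (frame_mx f))) // (eqP f_frame) ltnW.
pose k0 := Ordinal M_gt0.
have [x nz_x x_k0] := exists_nz_dotmx_eq0 (f k0) N_gt1.
(* ['Re (dotmx v (- 'i *: x))] is [- 'Im (dotmx v x)]. *)
pose g k := if k == k0 then - 'i *: x else dotmx x (f k) *: f k.
have [v nz_v Re_v] := exists_nz_Re_dotmx_eq0 g lt_M2N.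
apply/negP: nz_v; apply/negPn/eqP; apply: (phase_injective_sign f_inj nz_x).
  have := Re_v k0; rewrite /g eqxx linearZr_LR /= rmorphN /= conjCi opprK ReMil.
  by move/eqP; rewrite oppr_eq0 => /eqP/Creal_ImP.
move=> k; have [-> | nk0] := eqVneq k k0; first by rewrite x_k0 add0r sub0r normrN.
by apply: normCD_eq_normCB; have := Re_v k; rewrite /g (negPf nk0) linearZr_LR.
Qed.
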